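(* A left cancellative semigroup $S$ has either exactly one $\mathcal{R}$-class or infinitely many $\mathcal{R}$-classes.
   Context: $S$ is left cancellative if $ax=ay$ implies $x=y$ for all $a,x,y\in S$. $\mathcal{R}$ is Green's relation on $S$: $x\,\mathcal{R}\,y$ iff $xS^1=yS^1$. *)

Definition associative {S : Type} (mul : S -> S -> S) : Prop :=
  forall x y z, mul x (mul y z) = mul (mul x y) z.

Definition left_cancellative {S : Type} (mul : S -> S -> S) : Prop :=
  forall a x y, mul a x = mul a y -> x = y.

(* z \in x S^1, where S^1 = S with an identity adjoined, so x S^1 = {x} ∪ x S *)
Definition in_xS1 {S : Type} (mul : S -> S -> S) (x z : S) : Prop :=
  z = x \/ exists s, z = mul x s.

Definition greenR {S : Type} (mul : S -> S -> S) (x y : S) : Prop :=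
  forall z, in_xS1 mul x z <-> in_xS1 mul y z.

Definition one_R_class {S : Type} (mul : S -> S -> S) : Prop :=
  inhabited S /\ forall x y, greenR mul x y.

(* infinitely many R-classes: an injection of nat into the set of R-classes *)
Definition infinitely_many_R_classes {S : Type} (mul : S -> S -> S) : Prop :=
  exists f : nat -> S, forall i j, greenR mul (f i) (f j) -> i = j.

(* If a S^1 = S for every a, all elements are R-related.  Otherwise fix a with
   a S^1 <> S; we show the powers of a lie in pairwise distinct R-classes.  If
   a^i R a^j with i < j, then a^i = a^j s = a^i u for some u in a S^1, and left
   cancellation gives a = a u.  Cancelling a once more, u is a left identity,
   so every z = u z lies in a S^1, a contradiction. *)

From Stdlib Require Import Classical Arith Lia.

Section LeftCancellative.
Variables (T : Type) (mul : T -> T -> T).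
Hypotheses (assoc : associative mul) (lc : left_cancellative mul).

Lemma in_xS1_trans x y z : in_xS1 mul x y -> in_xS1 mul y z -> in_xS1 mul x z.
Proof.
  intros Hxy [-> | [t ->]]; [exact Hxy | right].
  destruct Hxy as [-> | [s ->]].
  - exists t; reflexivity.
  - exists (mul s t); symmetry; apply assoc.
Qed.

Lemma in_xS1_mul_l x y z :
  in_xS1 mul (mul x y) z -> exists u, in_xS1 mul y u /\ z = mul x u.
Proof.
  intros [-> | [s ->]].
  - exists y; split; [left | ]; reflexivity.
  - exists (mul y s); split; [right; exists s | symmetry; apply assoc]; reflexivity.
Qed.

Lemma in_xS1_full_of_right_unit a u :
  a = mul a u -> in_xS1 mul a u -> forall z, in_xS1 mul a z.
Proof.
  intros Hu Hin z.
  assert (left_unit : forall w, mul u w = w).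
  { intros w; apply (lc a); rewrite assoc, <- Hu; reflexivity. }
  apply (in_xS1_trans _ u); [exact Hin | ].
  right; exists z; symmetry; apply left_unit.
Qed.

(* Index shift: [pow a n] is a^(n+1), so that no junk zeroth power is needed. *)
Fixpoint pow (a : T) (n : nat) : T :=
  match n with 0 => a | S n => mul a (pow a n) end.

Lemma pow_add a m n : pow a (S (m + n)) = mul (pow a m) (pow a n).
Proof.
  induction m as [| m IH]; [reflexivity | ].
  simpl in *; rewrite IH; apply assoc.
Qed.

Lemma pow_in_xS1 a n : in_xS1 mul a (pow a n).
Proof. destruct n; [left | right; eexists]; reflexivity. Qed.

Lemma pow_right_unit a n u : pow a n = mul (pow a n) u -> a = mul a u.
Proof.
  induction n as [| n IH]; [easy | ].
  simpl; rewrite <- assoc; intros H; exact (IH (lc _ _ _ H)).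
Qed.

Lemma greenR_pow_full a i j :
  i < j -> greenR mul (pow a i) (pow a j) -> forall z, in_xS1 mul a z.
Proof.
  intros Hij G.
  assert (Hj : pow a j = mul (pow a i) (pow a (j - S i))).
  { rewrite <- pow_add; f_equal; lia. }
  destruct (in_xS1_mul_l (pow a i) (pow a (j - S i)) (pow a i)) as [u [Hu Heq]].
  { rewrite <- Hj; apply G; left; reflexivity. }
  apply (in_xS1_full_of_right_unit _ u).
  - exact (pow_right_unit _ _ _ Heq).
  - exact (in_xS1_trans _ _ _ (pow_in_xS1 _ _) Hu).
Qed.

End LeftCancellative.

Theorem mainTheorem8 (S : Type) (mul : S -> S -> S) (inh : inhabited S)
  (assoc : associative mul) (lc : left_cancellative mul) :
  one_R_class mul \/ infinitely_many_R_classes mul.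
Proof.
  destruct (classic (forall a z, in_xS1 mul a z)) as [Hall | Hn].
  - left; split; [exact inh | ].
    intros x y z; split; intros _; apply Hall.
  - right; apply not_all_ex_not in Hn; destruct Hn as [a Ha].
    exists (pow _ mul a); intros i j G.
    destruct (lt_eq_lt_dec i j) as [[Hlt | Heq] | Hgt]; [exfalso | exact Heq | exfalso];
      apply Ha.
    + exact (greenR_pow_full _ mul assoc lc a i j Hlt G).
    + apply (greenR_pow_full _ mul assoc lc a j i Hgt).
      intros z; split; apply G.
Qed.
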